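(* Let $H=\sum_{i=1}^d \epsilon_i |e_i\rangle\langle e_i|$ be the Hamiltonian of a $d$-dimensional quantum system and let $\rho=\sum_{i=1}^d p_i|e_i\rangle\langle e_i|$ be a full-rank state, with $\epsilon$-$s$ ensemble $\mathcal V(\rho)=\{\boldsymbol v_i=(\epsilon_i,-\log p_i):1\le i\le d\}$. For an integer $k\ge1$ let $$\mathcal V_k(\rho)=\Big\{\tfrac1k\sum_{i=1}^d c_i\boldsymbol v_i \;:\; c_i\in\mathbb{N}\cup\{0\},\ \sum_{i=1}^d c_i=k\Big\}.$$ Then $\rho$ is $k$-passive if and only if $[\rho,H]=0$ and $\mathcal V_k(\rho)$ is a totally ordered subset of $\mathbb{R}^2$.
   Context: A state $\sigma$ of a system with Hamiltonian $K$ is passive if $\mathrm{tr}(KU\sigma U^\dagger)\ge\mathrm{tr}(K\sigma)$ for all unitaries $U$. A state $\rho$ with Hamiltonian $H$ is $k$-passive if $\rho^{\otimes k}$ is passive with respect to the Hamiltonian $\sum_{i=1}^k H_i$ on $k$ copies, where $H_i$ is $H$ acting on the $i$-th copy. In $\mathbb{R}^2$, $(x_i,y_i)\le(x_j,y_j)$ means $x_i\le x_j$ and $y_i\le y_j$; a set is totally ordered if any two of its elements are comparable under $\le$. Note $\mathcal V_k(\rho)=\frac1k\mathcal V(\rho^{\otimes k})$, the $\epsilon$-$s$ ensemble of $k$ copies divided by $k$. *)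

From mathcomp Require Import all_boot all_order all_algebra reals exp complex mxtens.
Set Implicit Arguments. Unset Strict Implicit. Unset Printing Implicit Defensive.
Import Order.TTheory GRing.Theory Num.Theory.
Local Open Scope ring_scope.
Local Open Scope complex_scope.

Section Defs.
Variable R : realType.
Local Notation C := R[i].

Definition adjmx m n (A : 'M[C]_(m, n)) : 'M[C]_(n, m) := map_mx (@conjc R) A^T.

Definition unitary n (U : 'M[C]_n) : Prop := U *m adjmx U = 1%:M.

Definition passive n (K sigma : 'M[C]_n) : Prop :=
  forall U : 'M[C]_n, unitary U ->
    \tr (K *m sigma) <= \tr (K *m (U *m sigma *m adjmx U)).

Fixpoint tenspow d (A : 'M[C]_d) (k : nat) : 'M[C]_(d ^ k) :=
  match k return 'M[C]_(d ^ k) with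
  | 0 => 1%:M
  | k'.+1 => castmx (esym (expnS d k'), esym (expnS d k')) (tensmx A (tenspow A k'))
  end.

(* total Hamiltonian  sum_{i=1}^k H_i  on k copies, H_i = H acting on copy i:
   H_tot(k+1) = H (x) I_{d^k} + I_d (x) H_tot(k) *)
Fixpoint tenssum d (H : 'M[C]_d) (k : nat) : 'M[C]_(d ^ k) :=
  match k return 'M[C]_(d ^ k) with
  | 0 => 0
  | k'.+1 => castmx (esym (expnS d k'), esym (expnS d k'))
               (tensmx H (1%:M : 'M[C]_(d ^ k')) + tensmx (1%:M : 'M[C]_d) (tenssum H k'))
  end.

Definition k_passive d (rho H : 'M[C]_d) (k : nat) : Prop :=
  passive (tenssum H k) (tenspow rho k).

Definition diagR d (x : 'I_d -> R) : 'M[C]_d := diag_mx (\row_i (x i)%:C).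

Definition Vk d (eps p : 'I_d -> R) (k : nat) (v : R * R) : Prop :=
  exists c : 'I_d -> nat, (\sum_i c i)%N = k /\
    v = (k%:R^-1 * \sum_i (c i)%:R * eps i,
         k%:R^-1 * \sum_i (c i)%:R * (- ln (p i))).

Definition le2 (u v : R * R) : Prop := u.1 <= v.1 /\ u.2 <= v.2.

Definition totally_ordered (S : R * R -> Prop) : Prop :=
  forall u v, S u -> S v -> le2 u v \/ le2 v u.

End Defs.

From mathcomp Require Import all_boot all_order all_algebra reals exp complex mxtens.
From mathcomp Require Import perm ring lra.
Set Implicit Arguments. Unset Strict Implicit. Unset Printing Implicit Defensive.
Import Order.TTheory GRing.Theory Num.Theory Normc.
Local Open Scope ring_scope.

(* Everything is diagonal in the eigenbasis of H, so [rho, H] = 0 holds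
   automatically.  The k-copy state and Hamiltonian are diagonal, indexed by
   words a of length k over the levels, with populations q a = prod_i p_(a_i)
   and energies E a = sum_i eps_(a_i).  A diagonal state is passive iff its
   populations are anti-ordered with the energies: if E j < E l but
   q j < q l, swapping the two levels lowers the energy; conversely, for a
   unitary U the populations of U sigma U^dag are B q with B = (|U_ja|^2)
   doubly stochastic, and B q majorises q from the high-energy side (Abel
   summation over the energy levels, each tail sum controlled by the bathtub
   principle).  Finally V_k(rho) is exactly the set of points
   (E a, - ln q a) / k, and such a set is totally ordered iff E a < E b
   forces q b <= q a. *)

Section Rearrangement.
Variable R : realDomainType.

Lemma abel_sorted_ge (I : eqType) (E r : I -> R) (s : seq I) (m : R) :
  sorted (fun i j => E i <= E j) s -> all (fun i => m <= E i) s ->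
  (forall t, m <= t -> 0 <= \sum_(i <- s | t < E i) r i) ->
  m * \sum_(i <- s) r i <= \sum_(i <- s) E i * r i.
Proof.
elim: s m => [|x s IH] m /=; first by rewrite !big_nil mulr0.
rewrite path_sortedE; last by move=> ? ? ? /le_trans; apply.
case/andP=> Ex_le_s sorted_s /andP[m_le_Ex m_le_s] tails_ge0.
have IHx : E x * \sum_(i <- s) r i <= \sum_(i <- s) E i * r i.
  apply: IH => // t Ex_le_t; have := tails_ge0 t (le_trans m_le_Ex Ex_le_t).
  by rewrite big_cons ltNge Ex_le_t.
(* Either E x = m, or all of x :: s lies above m and the tail at t = m applies. *)
suff : 0 <= (E x - m) * \sum_(i <- x :: s) r i.
  by rewrite !big_cons; move: IHx; nra.
case: (ltgtP m (E x)) m_le_Ex => // [m_lt_Ex | <-] _; last by rewrite subrr mul0r.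
have -> : \sum_(i <- x :: s) r i = \sum_(i <- x :: s | m < E i) r i.
  rewrite -[RHS]big_filter (all_filterP _) //= m_lt_Ex.
  by apply/allP => i /(allP Ex_le_s); apply: lt_le_trans.
by rewrite mulr_ge0 ?subr_ge0 ?tails_ge0 // ltW.
Qed.

Lemma sum_mul_ge0_tails (I : finType) (E r : I -> R) :
  \sum_j r j = 0 -> (forall t, 0 <= \sum_(j | t < E j) r j) ->
  0 <= \sum_j E j * r j.
Proof.
move=> sum_r0 tails_ge0; pose s := sort (fun i j => E i <= E j) (index_enum I).
have sum_s (F : I -> R) (P : pred I) : \sum_(j <- s | P j) F j = \sum_(j | P j) F j.
  exact/perm_big/permEl/perm_sort.
have : sorted (fun i j => E i <= E j) s by apply: sort_sorted => i j; apply: le_total.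
rewrite -sum_s; case: s sum_s => [|x s'] sum_s sorted_s; first by rewrite big_nil.
apply: le_trans (abel_sorted_ge (r := r) (m := E x) sorted_s _ _).
- by rewrite sum_s sum_r0 mulr0.
- by rewrite /= lexx; apply: order_path_min sorted_s => ? ? ? /le_trans; apply.
- by move=> t _; rewrite sum_s.
Qed.

Lemma bathtub (I : finType) (A : pred I) (w q : I -> R) (M : R) :
  (forall a, 0 <= w a <= 1) -> \sum_a w a = #|A|%:R ->
  (forall a, A a -> q a <= M) -> (forall a, ~~ A a -> M <= q a) ->
  \sum_(a | A a) q a <= \sum_a w a * q a.
Proof.
move=> w01 sum_w qA qAC; pose c a : R := (A a)%:R.
have sum_c : \sum_a c a = \sum_a w a.
  rewrite sum_w -sum1_card natr_sum [RHS]big_mkcond.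
  by apply: eq_bigr => a _; rewrite /c unfold_in; case: (A a).
have -> : \sum_(a | A a) q a = \sum_a c a * q a.
  by rewrite big_mkcond; apply: eq_bigr => a _; rewrite /c; case: (A a); rewrite ?mul1r ?mul0r.
rewrite -subr_ge0.
have <- : \sum_a (w a - c a) * (q a - M) = \sum_a w a * q a - \sum_a c a * q a.
  rewrite (eq_bigr (fun a => (w a * q a - c a * q a) - (w a - c a) * M)); last by move=> a _; ring.
  by rewrite !sumrB -mulr_suml sumrB sum_c subrr mul0r subr0.
apply: sumr_ge0 => a _; have /andP[w_ge0 w_le1] := w01 a.
rewrite /c; case: (boolP (A a)) => Aa.
  by rewrite mulr_le0 // subr_le0 ?qA.
by rewrite subr0 mulr_ge0 // subr_ge0 qAC.
Qed.

Lemma doubly_stochastic_rearrangement (I : finType) (E q : I -> R) (B : I -> I -> R) :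
  (forall j a, 0 <= B j a) -> (forall j, \sum_a B j a = 1) ->
  (forall a, \sum_j B j a = 1) ->
  (forall j l, E j < E l -> q l <= q j) ->
  \sum_j E j * q j <= \sum_j E j * \sum_a B j a * q a.
Proof.
move=> B_ge0 B_row B_col anti; rewrite -subr_ge0 -sumrB.
(* The residual B q - q sums to zero, and its tail over each level set
   {t < E} is nonnegative by the bathtub principle, the threshold being the
   largest population on that set. *)
under eq_bigr do rewrite -mulrBr.
apply: sum_mul_ge0_tails => [|t].
  rewrite sumrB exchange_big /=; apply/eqP; rewrite subr_eq0; apply/eqP/eq_bigr => a _.
  by rewrite -mulr_suml B_col mul1r.
pose A j := t < E j; case: (pickP A) => [j0 Aj0|noA]; last by rewrite big_pred0.
have [jm Ajm q_le_jm] : exists2 jm, A jm & forall j, A j -> q j <= q jm.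
  by case: (arg_maxP q Aj0) => jm ? ?; exists jm.
rewrite sumrB subr_ge0 exchange_big /=.
under [X in _ <= X]eq_bigr do rewrite -mulr_suml.
apply: (bathtub (M := q jm)) => [a|||a notAa] //.
- rewrite sumr_ge0 //= -(B_col a) [X in _ <= X](bigID A) /= lerDl.
  exact: sumr_ge0.
- rewrite exchange_big /= (eq_bigr _ (fun j _ => B_row j)) -sum1_card natr_sum.
  by apply: eq_bigl => j; rewrite unfold_in.
- by apply: anti; apply: le_lt_trans Ajm; rewrite leNgt.
Qed.

End Rearrangement.

Local Open Scope complex_scope.

Section Unitary.
Variable R : realType.
Local Notation C := R[i].

Lemma sqr_normcE (z : C) : (normc z ^+ 2)%:C = z * z^*.
Proof. by rewrite rmorphXn -sqr_normc. Qed.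

Lemma mxtrace_diagR_mul n (E q : 'I_n -> R) :
  \tr (diagR E *m diagR q) = (\sum_j E j * q j)%:C.
Proof.
rewrite /mxtrace rmorph_sum; apply: eq_bigr => j _.
by rewrite mul_diag_mx !mxE eqxx !mulr1n rmorphM.
Qed.

Lemma mxtrace_diagR_conj n (E q : 'I_n -> R) (U : 'M[C]_n) :
  \tr (diagR E *m (U *m diagR q *m adjmx U)) =
  (\sum_j E j * \sum_a normc (U j a) ^+ 2 * q a)%:C.
Proof.
rewrite /mxtrace rmorph_sum; apply: eq_bigr => j _.
rewrite mul_diag_mx !mxE rmorphM rmorph_sum; congr (_ * _).
by apply: eq_bigr => a _; rewrite mul_mx_diag !mxE rmorphM /= sqr_normcE mulrAC.
Qed.

Lemma unitary_doubly_stochastic n (U : 'M[C]_n) : unitary U ->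
  (forall j, \sum_a normc (U j a) ^+ 2 = 1) /\
  (forall a, \sum_j normc (U j a) ^+ 2 = 1).
Proof.
move=> UU; split => [j|a]; apply: (@complexI R); rewrite rmorph_sum rmorph1.
  move/matrixP: UU => /(_ j j); rewrite !mxE eqxx mulr1n => <-.
  by apply: eq_bigr => a _; rewrite /= sqr_normcE !mxE.
move/mulmx1C/matrixP: UU => /(_ a a); rewrite !mxE eqxx mulr1n => <-.
by apply: eq_bigr => j _; rewrite /= sqr_normcE !mxE mulrC.
Qed.

Lemma unitary_perm_mx n (s : 'S_n) : unitary (perm_mx s : 'M[C]_n).
Proof.
rewrite /unitary; have -> : adjmx (perm_mx s : 'M[C]_n) = (perm_mx s)^T.
  by apply/matrixP => a b; rewrite !mxE conjc_nat.
by rewrite tr_perm_mx -perm_mxM mulgV perm_mx1.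
Qed.

Lemma passive_diagRP n (E q : 'I_n -> R) :
  passive (diagR E) (diagR q) <-> (forall j l, E j < E l -> q l <= q j).
Proof.
split=> [passive_q j l Ejl | anti U UU]; last first.
  rewrite mxtrace_diagR_mul mxtrace_diagR_conj lecR.
  have [row_sum col_sum] := unitary_doubly_stochastic UU.
  by apply: doubly_stochastic_rearrangement => // j a; apply: sqr_ge0.
(* Swapping the levels j and l changes the energy by (E j - E l) (q l - q j) < 0. *)
rewrite leNgt; apply/negP => qjl; pose s := tperm j l.
have jl : j != l by apply: contraTneq Ejl => ->; rewrite ltxx.
have := passive_q _ (unitary_perm_mx s).
rewrite mxtrace_diagR_mul mxtrace_diagR_conj lecR.
have permute i : \sum_a normc ((perm_mx s : 'M[C]_n) i a) ^+ 2 * q a = q (s i).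
  rewrite (bigD1 (s i)) //= big1 ?addr0 => [|a /negbTE sia]; rewrite !mxE.
    by rewrite eqxx normc1 expr1n mul1r.
  by rewrite eq_sym sia normc0 expr0n mul0r.
under [X in _ <= X]eq_bigr do rewrite permute.
apply/negP; rewrite -ltNge -subr_gt0 -sumrB.
rewrite (bigD1 j) //= (bigD1 l) 1?eq_sym //= big1 ?addr0; last first.
  by move=> i /andP[il ij]; rewrite tpermD 1?eq_sym // subrr.
rewrite tpermL tpermR.
have : 0 < (E l - E j) * (q l - q j) by apply: mulr_gt0; rewrite subr_gt0.
lra.
Qed.

End Unitary.

Section Digits.
Variable d : nat.

Definition split_index k (a : 'I_(d ^ k.+1)) : 'I_d * 'I_(d ^ k) :=
  mxtens_unindex (cast_ord (expnS d k) a).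

(* The word of one-copy levels labelling the product basis vector [a] of
   (C^d)^(x)k, following the index layout of [tensmx]. *)
Fixpoint digits k : 'I_(d ^ k) -> seq 'I_d :=
  match k return 'I_(d ^ k) -> seq 'I_d with
  | 0 => fun _ => [::]
  | k'.+1 => fun a => (split_index a).1 :: digits (split_index a).2
  end.

Lemma digitsS k (a : 'I_(d ^ k.+1)) :
  digits a = (split_index a).1 :: digits (split_index a).2.
Proof. by []. Qed.

Lemma split_indexK k (i : 'I_d) (a : 'I_(d ^ k)) :
  split_index (cast_ord (esym (expnS d k)) (mxtens_index (i, a))) = (i, a).
Proof. by rewrite /split_index cast_ordKV mxtens_indexK. Qed.

Lemma split_index_inj k : injective (@split_index k).
Proof. by move=> a b /(can_inj (@mxtens_unindexK _ _)) /cast_ord_inj. Qed.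

Lemma eq_split_index k (a b : 'I_(d ^ k.+1)) :
  (a == b) = ((split_index a).1 == (split_index b).1) &&
             ((split_index a).2 == (split_index b).2).
Proof. by rewrite -xpair_eqE -!surjective_pairing (inj_eq (@split_index_inj k)). Qed.

Lemma size_digits k (a : 'I_(d ^ k)) : size (digits a) = k.
Proof. by elim: k a => [|k IH] a //=; rewrite IH. Qed.

Lemma digits_onto k (s : seq 'I_d) : size s = k -> exists a : 'I_(d ^ k), digits a = s.
Proof.
elim: k s => [|k IH] [|i s] // size_s; first by exists (cast_ord (esym (expn0 d)) ord0).
have [a digits_a] := IH s (succn_inj size_s).
exists (cast_ord (esym (expnS d k)) (mxtens_index (i, a))).
by rewrite digitsS split_indexK digits_a.
Qed.

End Digits.

Lemma sumr_count_mem (S : pzSemiRingType) (I : finType) (s : seq I) (F : I -> S) :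
  \sum_(i <- s) F i = \sum_i (count_mem i s)%:R * F i.
Proof.
elim: s => [|x s IH]; first by rewrite big_nil big1 // => i _; rewrite mul0r.
rewrite big_cons IH /= -[F x]mul1r (bigD1 x) //= [in RHS](bigD1 x) //= eqxx.
rewrite natrD mulrDl addrA; congr (_ + _); apply: eq_bigr => i /negbTE.
by rewrite eq_sym => ->; rewrite add0n.
Qed.

Lemma sumn_count_mem (I : finType) (s : seq I) : (\sum_i count_mem i s)%N = size s.
Proof.
elim: s => [|x s IH]; first by rewrite big1.
rewrite /= big_split /= IH (bigD1 x) //= eqxx big1 // => i /negbTE.
by rewrite eq_sym => ->.
Qed.

Lemma digits_count d k (c : 'I_d -> nat) : (\sum_i c i)%N = k ->
  exists a : 'I_(d ^ k), forall i, count_mem i (digits a) = c i.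
Proof.
pose s := flatten [seq nseq (c i) i | i <- index_enum 'I_d].
have count_s i : count_mem i s = c i.
  rewrite count_flatten sumnE !big_map (bigD1 i) //= count_nseq /= eqxx mul1n.
  by rewrite big1 ?addn0 // => j /negbTE ji; rewrite count_nseq /= ji.
move=> sum_c; have [a digits_a] : exists a : 'I_(d ^ k), digits a = s.
  by apply: digits_onto; rewrite -sumn_count_mem -sum_c; apply: eq_bigr => i _; apply: count_s.
by exists a => i; rewrite digits_a count_s.
Qed.

Section TensorPowers.
Variables (R : realType) (d : nat).

Lemma tenspow_diagR (p : 'I_d -> R) k :
  tenspow (diagR p) k = diagR (fun a => \prod_(i <- digits a) p i).
Proof.
elim: k => [|k IH]; apply/matrixP => a b; first by rewrite !mxE big_nil.
rewrite /= castmxE !esymK IH !mxE big_cons eq_split_index.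
by case: eqP; case: eqP; rewrite ?mulr0n ?mulr1n ?mul0r ?mulr0 // rmorphM.
Qed.

Lemma tenssum_diagR (e : 'I_d -> R) k :
  tenssum (diagR e) k = diagR (fun a => \sum_(i <- digits a) e i).
Proof.
elim: k => [|k IH]; apply/matrixP => a b; first by rewrite !mxE big_nil mul0rn.
rewrite /= castmxE !esymK IH !mxE big_cons eq_split_index.
by case: eqP; case: eqP;
  rewrite ?mulr0n ?mulr1n ?mul0r ?mulr0 ?mul1r ?mulr1 ?addr0 ?add0r // rmorphD.
Qed.

End TensorPowers.

Lemma ln_prod (R : realType) (I : Type) (s : seq I) (f : I -> R) :
  (forall i, 0 < f i) -> ln (\prod_(i <- s) f i) = \sum_(i <- s) ln (f i).
Proof.
move=> f_gt0; elim: s => [|x s IH]; first by rewrite !big_nil ln1.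
by rewrite !big_cons lnM ?posrE ?prodr_gt0 // IH.
Qed.

Lemma totally_ordered_imageP (R : realType) (T : Type) (S : R * R -> Prop) (x y : T -> R) :
  (forall v, S v <-> exists a, v = (x a, y a)) ->
  totally_ordered S <-> (forall a b, x a < x b -> y a <= y b).
Proof.
move=> S_image; split=> [ord a b xab | mono u v /S_image[a ->] /S_image[b ->]].
  have [[_ //]|[xba _]] := ord _ _ (proj2 (S_image _) (ex_intro _ a erefl))
                                   (proj2 (S_image _) (ex_intro _ b erefl)).
  by move: xab; rewrite ltNge xba.
rewrite /le2 /=; case: (ltgtP (x a) (x b)) => [xab|xba|_].
- by left; split; last apply: mono.
- by right; split; last apply: mono.
- by case/orP: (le_total (y a) (y b)) => ?; [left | right].
Qed.

Section KCopies.
Variables (R : realType) (d : nat) (eps p : 'I_d -> R) (k : nat).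
Hypothesis p_gt0 : forall i, 0 < p i.

Lemma Vk_digitsP v : Vk eps p k v <->
  exists a : 'I_(d ^ k), v = (k%:R^-1 * \sum_(i <- digits a) eps i,
                              k%:R^-1 * - ln (\prod_(i <- digits a) p i)).
Proof.
have point (a : 'I_(d ^ k)) (c : 'I_d -> nat) : (forall i, count_mem i (digits a) = c i) ->
    (k%:R^-1 * \sum_(i <- digits a) eps i, k%:R^-1 * - ln (\prod_(i <- digits a) p i)) =
    (k%:R^-1 * \sum_i (c i)%:R * eps i, k%:R^-1 * \sum_i (c i)%:R * - ln (p i)).
  move=> count_a; rewrite (ln_prod _ p_gt0) -sumrN.
  rewrite (sumr_count_mem _ eps) (sumr_count_mem _ (fun i => - ln (p i))).
  by congr (_ * _, _ * _); apply: eq_bigr => i _; rewrite count_a.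
split=> [[c [sum_c ->]] | [a ->]].
  by have [a count_a] := digits_count sum_c; exists a; rewrite (point a c).
exists (fun i => count_mem i (digits a)); split; last exact: point.
by rewrite sumn_count_mem size_digits.
Qed.

End KCopies.

Theorem lemma2 (R : realType) (d : nat) (eps p : 'I_d -> R) (k : nat) :
  (0 < k)%N ->
  (forall i, 0 < p i) -> \sum_i p i = 1 ->
  k_passive (diagR p) (diagR eps) k <->
  (diagR p *m diagR eps = diagR eps *m diagR p /\ totally_ordered (Vk eps p k)).
Proof.
move=> k_gt0 p_gt0 _.
rewrite /k_passive tenspow_diagR tenssum_diagR passive_diagRP.
rewrite (totally_ordered_imageP (Vk_digitsP eps k p_gt0)).
have k_inv_gt0 : 0 < k%:R^-1 :> R by rewrite invr_gt0 ltr0n.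
have q_gt0 (a : 'I_(d ^ k)) : 0 < \prod_(i <- digits a) p i by apply: prodr_gt0.
split=> [anti | [_ mono] a b Eab]; first split; first exact: diag_mxC.
  by move=> a b; rewrite ltr_pM2l // ler_pM2l // lerN2 ler_ln ?posrE //; apply: anti.
by move: (mono a b); rewrite ltr_pM2l // ler_pM2l // lerN2 ler_ln ?posrE //; apply.
Qed.
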